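(* There are absolute constants $c>0$ and $n_0$ such that for every $n\ge n_0$ and every integer $G$ with $1\le G\le 2^{n/4}$, there exists a Boolean function $f:\{0,1\}^n\to\{0,1\}$ that is computed by some formula on $n$ input variables with at most $G$ gates, but every formula computing $f$ has formula size at least $c\,nG/\log n$.
   Context: A formula on input variables $x_1,\dots,x_n$ is a rooted tree whose leaves are labeled by input variables (the same variable may label many leaves) and whose internal vertices are \textsc{not} gates (fanin 1) or unbounded-fanin \textsc{and}/\textsc{or} gates. The formula size is the number of leaves (inputs counted with multiplicity); the gate count is the number of \textsc{and} and \textsc{or} gates. *)

From mathcomp Require Import all_boot.
From Stdlib Require Import Reals.

Set Implicit Arguments.
Unset Strict Implicit.
Unset Printing Implicit Defensive.

(* AND/OR gates take a first child plus a list of further children, so that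
   every gate has fanin >= 1 (all leaves are variables). *)
Inductive formula (n : nat) : Type :=
| FVar : 'I_n -> formula n
| FNot : formula n -> formula n
| FAnd : formula n -> list (formula n) -> formula n
| FOr  : formula n -> list (formula n) -> formula n.

Arguments FVar {n}.
Arguments FNot {n}.
Arguments FAnd {n}.
Arguments FOr {n}.

Fixpoint feval (n : nat) (x : 'I_n -> bool) (F : formula n) : bool :=
  match F with
  | FVar i => x i
  | FNot G => ~~ feval x G
  | FAnd G Gs =>
      feval x G &&
      (fix ev (l : list (formula n)) : bool :=
         match l with nil => true | H :: t => feval x H && ev t end) Gs
  | FOr G Gs =>
      feval x G ||
      (fix ev (l : list (formula n)) : bool :=
         match l with nil => false | H :: t => feval x H || ev t end) Gs
  end.

Fixpoint fsize (n : nat) (F : formula n) : nat :=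
  match F with
  | FVar _ => 1
  | FNot G => fsize G
  | FAnd G Gs | FOr G Gs =>
      fsize G +
      (fix sz (l : list (formula n)) : nat :=
         match l with nil => 0 | H :: t => fsize H + sz t end) Gs
  end.

Fixpoint fgates (n : nat) (F : formula n) : nat :=
  match F with
  | FVar _ => 0
  | FNot G => fgates G
  | FAnd G Gs | FOr G Gs =>
      1 + fgates G +
      (fix gt (l : list (formula n)) : nat :=
         match l with nil => 0 | H :: t => fgates H + gt t end) Gs
  end.

Definition computes (n : nat) (F : formula n) (f : ('I_n -> bool) -> bool) : Prop :=
  forall x : 'I_n -> bool, feval x F = f x.

From mathcomp Require Import all_boot zify.
From Stdlib Require Import Reals Lra ClassicalEpsilon Classical.
Local Notation "m ^ n" := (expn m n) : nat_scope.

Set Implicit Arguments.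
Unset Strict Implicit.
Unset Printing Implicit Defensive.

(* Gate count versus formula size: a counting (Shannon-type) argument.

   Upper side: split the [n] variables into a guard [z], [k] address bits and
   [m >= n / 2] data variables.  For every selector [S] choosing a set of data
   variables for each of [g + 1 ~ G] addresses, the DNF
   [OR_i (z /\ address = i /\ AND_(j in S i) y_j)] uses at most [G] gates, and
   distinct selectors give distinct functions: [2 ^ (m (g + 1))] of them.

   Lower side: a formula of size [s] has a negation normal form, a binary
   tree with [s] literal leaves, written in prefix code as a word of length
   [2 s] over [2 n + 2] symbols.  Hence at most [(2 n + 2) ^ (2 s)] functions
   have formulas of size [s], and by pigeonhole some member of the family
   needs size above any [s] with [(2 n + 2) ^ (2 s) < 2 ^ (m (g + 1))], which
   holds for [s ~ n G / (100 ln n)] as long as [G <= 2 ^ (n / 4)]. *)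

Fixpoint lall (T : Type) (P : T -> Prop) (l : list T) : Prop :=
  match l with nil => True | x :: t => P x /\ lall P t end.

(* Pointwise agreement under [lall] lifts to [all], [has] and sums; these
   let the nested induction hypotheses be used on lists of subformulas. *)
Lemma lall_eq_all_has (T : Type) (P : T -> Prop) (a b : pred T) (l : list T) :
  (forall t, P t -> a t = b t) -> lall P l -> all a l = all b l /\ has a l = has b l.
Proof.
move=> Hab; elim: l => [|t l IH] //= [/Hab Et /IH [-> ->]]; by rewrite Et.
Qed.

Lemma lall_sumn (T : Type) (P : T -> Prop) (f g : T -> nat) (l : list T) :
  (forall t, P t -> f t = g t) -> lall P l -> sumn (map f l) = sumn (map g l).
Proof. move=> Hfg; elim: l => [|t l IH] //= [/Hfg -> /IH ->]; by []. Qed.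

Section Formulas.
Variable n : nat.

Definition formula_nested_ind (P : formula n -> Prop)
  (hv : forall i, P (FVar i)) (hn : forall G, P G -> P (FNot G))
  (ha : forall G Gs, P G -> lall P Gs -> P (FAnd G Gs))
  (ho : forall G Gs, P G -> lall P Gs -> P (FOr G Gs)) : forall F, P F :=
  fix rec F := match F return P F with
  | FVar i => hv i
  | FNot G => hn G (rec G)
  | FAnd G Gs => ha G Gs (rec G)
      ((fix go l : lall P l := match l return lall P l with
          nil => I | H :: t => conj (rec H) (go t) end) Gs)
  | FOr G Gs => ho G Gs (rec G)
      ((fix go l : lall P l := match l return lall P l with
          nil => I | H :: t => conj (rec H) (go t) end) Gs)
  end.

(* The inner fixpoints of [feval], [fsize] and [fgates] are the library's
   [all], [has] and [sumn \o map]. *)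
Lemma feval_and (x : 'I_n -> bool) G Gs :
  feval x (FAnd G Gs) = feval x G && all (feval x) Gs.
Proof. rewrite /=; congr andb; by elim: Gs => //= H t ->. Qed.

Lemma feval_or (x : 'I_n -> bool) G Gs :
  feval x (FOr G Gs) = feval x G || has (feval x) Gs.
Proof. rewrite /=; congr orb; by elim: Gs => //= H t ->. Qed.

Lemma fsize_and (G : formula n) Gs :
  fsize (FAnd G Gs) = fsize G + sumn (map (@fsize n) Gs).
Proof. rewrite /=; congr addn; by elim: Gs => //= H t ->. Qed.

Lemma fsize_or (G : formula n) Gs :
  fsize (FOr G Gs) = fsize G + sumn (map (@fsize n) Gs).
Proof. rewrite /=; congr addn; by elim: Gs => //= H t ->. Qed.

Lemma fgates_and (G : formula n) Gs :
  fgates (FAnd G Gs) = 1 + fgates G + sumn (map (@fgates n) Gs).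
Proof. rewrite /=; congr addn; by elim: Gs => //= H t ->. Qed.

Lemma fgates_or (G : formula n) Gs :
  fgates (FOr G Gs) = 1 + fgates G + sumn (map (@fgates n) Gs).
Proof. rewrite /=; congr addn; by elim: Gs => //= H t ->. Qed.

Definition big_or (F : formula n) (Fs : seq (formula n)) : formula n :=
  if Fs is nil then F else FOr F Fs.

Lemma feval_big_or x F Fs : feval x (big_or F Fs) = feval x F || has (feval x) Fs.
Proof. by case: Fs => [|H Hs]; rewrite ?orbF // feval_or. Qed.

Lemma fgates_big_or F Fs :
  fgates (big_or F Fs) = (0 < size Fs) + fgates F + sumn (map (@fgates n) Fs).
Proof. by case: Fs => [|H Hs]; rewrite ?addn0 // fgates_or. Qed.

(* Negation normal form: binary AND/OR trees over literals, where [Lit b i]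
   denotes [x i (+) b] and [Bin true] / [Bin false] are AND / OR.  A leaf is
   a literal, so the number of leaves equals the formula size. *)
Inductive nnf : Type := Lit of bool & 'I_n | Bin of bool & nnf & nnf.

Fixpoint nnf_eval (x : 'I_n -> bool) (t : nnf) : bool :=
  match t with
  | Lit b i => x i (+) b
  | Bin o l r => if o then nnf_eval x l && nnf_eval x r
                 else nnf_eval x l || nnf_eval x r
  end.

Fixpoint nnf_size (t : nnf) : nat :=
  match t with Lit _ _ => 1 | Bin _ l r => nnf_size l + nnf_size r end.

(* [to_nnf F p] computes [F (+) p]: negations are pushed to the leaves by
   De Morgan's laws, and each unbounded-fanin gate becomes a left comb. *)
Fixpoint to_nnf (F : formula n) (p : bool) : nnf :=
  match F with
  | FVar i => Lit p i
  | FNot G => to_nnf G (~~ p)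
  | FAnd G Gs => foldl (fun a H => Bin (~~ p) a (to_nnf H p)) (to_nnf G p) Gs
  | FOr G Gs => foldl (fun a H => Bin p a (to_nnf H p)) (to_nnf G p) Gs
  end.

Lemma comb_eval x o (f : formula n -> nnf) acc l :
  nnf_eval x (foldl (fun a H => Bin o a (f H)) acc l) =
  if o then nnf_eval x acc && all (fun H => nnf_eval x (f H)) l
  else nnf_eval x acc || has (fun H => nnf_eval x (f H)) l.
Proof.
elim: l acc => [|H t IH] acc /=; first by case: o; rewrite ?andbT ?orbF.
rewrite IH /= {IH}; case: o; by rewrite ?andbA ?orbA.
Qed.

Lemma comb_size o (f : formula n -> nnf) acc l :
  nnf_size (foldl (fun a H => Bin o a (f H)) acc l) =
  nnf_size acc + sumn (map (fun H => nnf_size (f H)) l).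
Proof.
elim: l acc => [|H t IH] acc /=; first by rewrite addn0.
by rewrite IH /= addnA.
Qed.

Lemma to_nnf_eval x F : forall p, nnf_eval x (to_nnf F p) = feval x F (+) p.
Proof.
elim/formula_nested_ind: F => [i|G IH|G Gs IH IHs|G Gs IH IHs] p //.
- by rewrite /= IH addbN addNb.
- have [Eall Ehas] := lall_eq_all_has
    (fun H (IHH : forall q, nnf_eval x (to_nnf H q) = feval x H (+) q) => IHH p) IHs.
  rewrite feval_and /= comb_eval IH Eall Ehas {Eall Ehas IHs}.
  case: p; rewrite /= ?addbT ?addbF; last by under eq_all do rewrite addbF.
  by rewrite negb_and -has_predC; under eq_has do rewrite addbT.
- have [Eall Ehas] := lall_eq_all_has
    (fun H (IHH : forall q, nnf_eval x (to_nnf H q) = feval x H (+) q) => IHH p) IHs.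
  rewrite feval_or /= comb_eval IH Eall Ehas {Eall Ehas IHs}.
  case: p; rewrite /= ?addbT ?addbF; last by under eq_has do rewrite addbF.
  by rewrite negb_or -all_predC; under eq_all do rewrite addbT.
Qed.

Lemma to_nnf_size F : forall p, nnf_size (to_nnf F p) = fsize F.
Proof.
elim/formula_nested_ind: F => [i|G IH|G Gs IH IHs|G Gs IH IHs] p //.
- exact: IH.
- by rewrite fsize_and /= comb_size IH (lall_sumn (fun H (IHH : forall q, _) => IHH p) IHs).
- by rewrite fsize_or /= comb_size IH (lall_sumn (fun H (IHH : forall q, _) => IHH p) IHs).
Qed.

End Formulas.

Section Counting.
Variable n : nat.

(* Prefix (Polish) code of negation normal forms over the alphabet of
   literals [inl (b, i)] and binary gates [inr o]: a tree with [s] leaves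
   is written with [2 s - 1] symbols, and decoding is unambiguous. *)
Definition symbol := ((bool * 'I_n) + bool)%type.

Fixpoint encode (t : nnf n) : seq symbol :=
  match t with
  | Lit b i => [:: inl (b, i)]
  | Bin o l r => inr o :: encode l ++ encode r
  end.

(* [decode fuel s] parses one tree from the front of [s], returning it with
   the unread rest; [fuel] bounds the recursion depth. *)
Fixpoint decode (fuel : nat) (s : seq symbol) : option (nnf n * seq symbol) :=
  match fuel, s with
  | 0, _ | _, nil => None
  | _, inl (b, i) :: r => Some (Lit b i, r)
  | fuel'.+1, inr o :: r =>
    if decode fuel' r is Some (l, r1) then
      if decode fuel' r1 is Some (rr, r2) then Some (Bin o l rr, r2) else None
    else None
  end.

Lemma encode_size t : (size (encode t)).+1 = 2 * nnf_size t.
Proof. elim: t => [b i|o l IHl r IHr] //=; rewrite size_cat; lia. Qed.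

Lemma decode_encode t fuel rest : size (encode t) <= fuel ->
  decode fuel (encode t ++ rest) = Some (t, rest).
Proof.
elim: t fuel rest => [b i|o l IHl r IHr] [|fuel] rest //=.
rewrite size_cat ltnS => Hs.
rewrite -catA IHl; last by apply: leq_trans Hs; apply: leq_addr.
rewrite IHr //; apply: leq_trans Hs; apply: leq_addl.
Qed.

(* The Boolean function described by a word of length [L] (constant false
   when the word is not a valid code). *)
Definition decoded_fun (L : nat) (w : L.-tuple symbol) : ('I_n -> bool) -> bool :=
  fun x => if decode L w is Some (t, _) then nnf_eval x t else false.

(* Every formula of size [s] is described by some word of length [2 s]
   (its code padded with junk). *)
Lemma formula_decoded L (F : formula n) : 2 * fsize F <= L ->
  exists w : L.-tuple symbol, computes F (decoded_fun w).
Proof.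
move=> HL; set t := to_nnf F false.
have Ht : size (encode t) < L by have := encode_size t; rewrite to_nnf_size; lia.
set s := encode t ++ nseq (L - size (encode t)) (inr true : symbol).
have Hs : size s == L by rewrite size_cat size_nseq subnKC // ltnW.
exists (Tuple Hs) => x.
by rewrite /decoded_fun /= decode_encode ?to_nnf_eval ?addbF // ltnW.
Qed.

Lemma uncovered_member (I T : finType) (fam : I -> ('I_n -> bool) -> bool)
  (phi : T -> ('I_n -> bool) -> bool) :
  (forall i j, fam i =1 fam j -> i = j) -> #|T| < #|I| ->
  exists i, forall t, ~ phi t =1 fam i.
Proof.
move=> fam_inj Hcard; apply: NNPP => Hcover.
have Hcode : forall i, exists t, phi t =1 fam i.
  move=> i; apply: NNPP => Hi; apply: Hcover; exists i => t Ht; apply: Hi; by exists t.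
pose code i := proj1_sig (constructive_indefinite_description _ (Hcode i)).
have code_spec i : phi (code i) =1 fam i.
  exact: proj2_sig (constructive_indefinite_description _ (Hcode i)).
have code_inj : injective code.
  by move=> i j Eij; apply: fam_inj => x; rewrite -!code_spec Eij.
by have := leq_card code code_inj; rewrite leqNgt Hcard.
Qed.

Lemma counting_lower_bound (I : finType) (fam : I -> ('I_n -> bool) -> bool) s :
  (forall i j, fam i =1 fam j -> i = j) -> (2 * n + 2) ^ (2 * s) < #|I| ->
  exists i, forall F : formula n, computes F (fam i) -> s < fsize F.
Proof.
move=> fam_inj Hcard.
have Hcodes : #|{: (2 * s).-tuple symbol}| < #|I|.
  by rewrite card_tuple card_sum card_prod card_bool card_ord.
have [i Hi] := uncovered_member (@decoded_fun (2 * s)) fam_inj Hcodes.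
exists i => F HF; rewrite ltnNge; apply/negP => Hsmall.
have [w Hw] : exists w : (2 * s).-tuple symbol, computes F (decoded_fun w).
  by apply: formula_decoded; rewrite leq_mul2l Hsmall orbT.
by apply: (Hi w) => x; rewrite -Hw HF.
Qed.

End Counting.

Lemma binary_digits_inj k i j : i < 2 ^ k -> j < 2 ^ k ->
  (forall b, b < k -> odd (i %/ 2 ^ b) = odd (j %/ 2 ^ b)) -> i = j.
Proof.
elim: k i j => [|k IH] i j.
  by rewrite expn0 !ltnS !leqn0 => /eqP -> /eqP ->.
move=> Hi Hj Hbits.
have Hodd := Hbits 0 isT; rewrite expn0 !divn1 in Hodd.
have Hhalf : i./2 = j./2.
  apply: IH; rewrite -?divn2 ?ltn_divLR -?expnSr // => b Hb.
  by have := Hbits b.+1 Hb; rewrite expnS -!divnMA.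
by rewrite -(odd_double_half i) -(odd_double_half j) Hodd Hhalf.
Qed.

(* The [n] variables are split into a guard variable [z],
   [k] address variables [a_b] and [m] data variables [y_j].  A selector [S]
   picks a set [S i] of data variables for each of the [g + 1] addresses
   [i < 2 ^ k]; its function is the DNF
     OR_i ( z /\ (a = binary code of i) /\ AND_(j in S i) y_j ),
   which uses at most [g + 2] gates.  Distinct selectors give distinct
   functions, so the family has [2 ^ (m (g + 1))] members.  The guard [z]
   gives every term a first child even when [k = 0] and [S i] is empty. *)
Section HardFamily.
Variables n k m g : nat.
Hypothesis var_split : k.+1 + m = n.

(* Variable layout: [z] at position 0, [a_b] at [1 + b], [y_j] at [k + 1 + j]. *)
Lemma z_lt : 0 < n. Proof. by rewrite -var_split. Qed.
Lemma avar_lt (b : 'I_k) : b.+1 < n.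
Proof. by rewrite -var_split ltnS ltn_addr. Qed.
Lemma yvar_lt (j : 'I_m) : k.+1 + j < n.
Proof. by rewrite -var_split ltn_add2l. Qed.

Definition z : 'I_n := Ordinal z_lt.
Definition avar (b : 'I_k) : 'I_n := Ordinal (avar_lt b).
Definition yvar (j : 'I_m) : 'I_n := Ordinal (yvar_lt j).

Definition selector := {ffun 'I_g.+1 -> {ffun 'I_m -> bool}}.

Lemma card_selector : #|{: selector}| = 2 ^ (m * g.+1).
Proof. by rewrite card_ffun card_ffun card_bool !card_ord expnM. Qed.

Definition address_lit (i : nat) (b : 'I_k) : formula n :=
  if odd (i %/ 2 ^ b) then FVar (avar b) else FNot (FVar (avar b)).

Definition term (S : selector) (i : 'I_g.+1) : formula n :=
  FAnd (FVar z) (map (address_lit i) (enum 'I_k) ++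
                 map (FVar \o yvar) (filter (S i) (enum 'I_m))).

Definition dnf (S : selector) : formula n :=
  big_or (term S ord0) (map (term S \o lift ord0) (enum 'I_g)).

Definition term_sem (S : selector) (i : 'I_g.+1) (x : 'I_n -> bool) : bool :=
  [&& x z, [forall b : 'I_k, x (avar b) == odd (i %/ 2 ^ b)]
         & [forall j : 'I_m, S i j ==> x (yvar j)]].

Definition fam (S : selector) (x : 'I_n -> bool) : bool := feval x (dnf S).

Lemma term_eval S i x : feval x (term S i) = term_sem S i x.
Proof.
rewrite /term feval_and all_cat /term_sem !all_map; congr [&& _, _ & _].
- apply/allP/forallP => [H b|H b _]; [have := H b (mem_index_enum b) | have := H b];
    by rewrite /address_lit /=; case: odd => /=; rewrite ?eqb_id ?eqbF_neg.
- apply/allP/forallP => [H j|H j].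
  + by apply/implyP => Hs; apply: H; rewrite mem_filter Hs mem_enum.
  + by rewrite mem_filter => /andP [Hs _]; have := H j; rewrite Hs.
Qed.

Lemma fam_eval S x : fam S x = [exists i, term_sem S i x].
Proof.
rewrite /fam /dnf feval_big_or term_eval has_map.
rewrite (eq_has (a2 := fun i => term_sem S (lift ord0 i) x)); last first.
  by move=> i; exact: term_eval.
apply/idP/existsP => [/orP [H|/hasP [i _ H]]|[i]]; first by exists ord0.
- by exists (lift ord0 i).
- case: (unliftP ord0 i) => [j ->|->] H; last by rewrite H.
  by apply/orP; right; apply/hasP; exists j; rewrite ?mem_enum.
Qed.

Lemma term_gates S i : fgates (term S i) = 1.
Proof.
have sumn0 (T : Type) (f : T -> nat) (l : seq T) :
    (forall t, f t = 0) -> sumn (map f l) = 0.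
  by move=> f0; elim: l => //= t l ->; rewrite f0.
rewrite /term fgates_and map_cat sumn_cat -!map_comp !sumn0 // => b.
by rewrite /= /address_lit; case: odd.
Qed.

Lemma dnf_gates S : fgates (dnf S) = (0 < g) + g.+1.
Proof.
rewrite /dnf fgates_big_or size_map size_enum_ord term_gates -map_comp.
rewrite (eq_map (g := fun _ => 1)) => [|i]; last exact: term_gates.
by rewrite (sumn_count predT) count_predT size_enum_ord; lia.
Qed.

Hypothesis addresses_fit : g.+1 <= 2 ^ k.

(* The input distinguishing selectors at position [(i, j)]: guard on, address
   [i], and every data variable on except [y_j].  Exactly the term [i] can
   fire, and it fires iff [j] is not selected by [S i]. *)
Definition probe (i : 'I_g.+1) (j : 'I_m) (v : 'I_n) : bool :=
  if v == 0 :> nat then true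
  else if v <= k then odd (i %/ 2 ^ v.-1) else v - k.+1 != j.

Lemma probe_address i j (i' : 'I_g.+1) :
  [forall b : 'I_k, probe i j (avar b) == odd (i' %/ 2 ^ b)] = (i' == i).
Proof.
apply/forallP/eqP => [Hbits|-> b]; last by rewrite /probe /= ltn_ord.
apply: val_inj; apply: (@binary_digits_inj k).
- exact: leq_trans (ltn_ord i') addresses_fit.
- exact: leq_trans (ltn_ord i) addresses_fit.
- by move=> b Hb; have := Hbits (Ordinal Hb); rewrite /probe /= Hb => /eqP.
Qed.

Lemma probe_data i j (S : selector) :
  [forall j' : 'I_m, S i j' ==> probe i j (yvar j')] = ~~ S i j.
Proof.
have probe_y j' : probe i j (yvar j') = (j' != j).
  by rewrite /probe /= addSn ltnNge leq_addr /= subSS addKn.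
apply/forallP/idP => [/(_ j)|Hj j']; first by rewrite probe_y eqxx implybF.
by rewrite probe_y; apply/implyP => Hs; apply/eqP => Ej; rewrite -Ej Hs in Hj.
Qed.

Lemma term_sem_probe (S : selector) i j i' :
  term_sem S i' (probe i j) = (i' == i) && ~~ S i j.
Proof. by rewrite /term_sem probe_address; case: eqP => //= ->; rewrite probe_data. Qed.

Lemma fam_inj (S T : selector) : fam S =1 fam T -> S = T.
Proof.
move=> Hfam; apply/ffunP => i; apply/ffunP => j.
have Hprobe (U : selector) : fam U (probe i j) = ~~ U i j.
  rewrite fam_eval; apply/existsP/idP => [[i']|HU]; last by exists i; rewrite term_sem_probe eqxx.
  by rewrite term_sem_probe => /andP [].
by have := Hfam (probe i j); rewrite !Hprobe => /negb_inj.
Qed.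

End HardFamily.

Lemma INR_expn a b : INR (a ^ b) = (INR a ^ b)%R.
Proof. elim: b => [|b IH] //; by rewrite expnS -multE mult_INR IH. Qed.

Lemma INR_muln a b : INR (a * b) = (INR a * INR b)%R.
Proof. by rewrite -multE mult_INR. Qed.

Lemma INR_addn a b : INR (a + b) = (INR a + INR b)%R.
Proof. by rewrite -plusE plus_INR. Qed.

Lemma INR2 : INR 2 = 2%R.
Proof. rewrite /=; lra. Qed.

Lemma INR_ge8 n : 8 <= n -> (8 <= INR n)%R.
Proof. by move=> /leP/le_INR; rewrite /=; lra. Qed.

Lemma ln_le x y : (0 < x)%R -> (x <= y)%R -> (ln x <= ln y)%R.
Proof.
move=> Hx /Rle_lt_or_eq_dec [Hxy|->]; last exact: Rle_refl.
exact/Rlt_le/ln_increasing.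
Qed.

Lemma nat_floor (x : R) : (0 <= x)%R -> exists s : nat, (INR s <= x < INR s + 1)%R.
Proof.
move=> Hx; have [Hup1 Hup2] := archimed x.
have Hup : (0 < up x)%Z by apply: lt_0_IZR; lra.
exists (Z.to_nat (up x - 1)).
rewrite INR_IZR_INZ Znat.Z2Nat.id; last lia.
rewrite minus_IZR; lra.
Qed.

Lemma address_length_bound (n G k : nat) : 2 ^ k <= 2 * G ->
  (INR G <= Rpower 2 (INR n / 4))%R -> (INR k <= 1 + INR n / 4)%R.
Proof.
move=> /leP/le_INR Hk HG; rewrite INR_expn INR_muln INR2 in Hk.
have Hpow : (0 < 2 ^ k)%R by apply: pow_lt; lra.
have HG0 : (0 < INR G)%R by lra.
have Hln2 := ln_lt_2.
have Hk' := ln_le Hpow Hk; rewrite ln_pow ?ln_mult in Hk'; try lra.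
have HG' : (ln (INR G) <= INR n / 4 * ln 2)%R by rewrite -ln_Rpower; apply: ln_le.
apply: (Rmult_le_reg_r (ln 2)); lra.
Qed.

Lemma choose_parameters (n G : nat) : 8 <= n -> 1 <= G ->
  (INR G <= Rpower 2 (INR n / 4))%R ->
  exists k m g : nat, [/\ k.+1 + m = n, g.+1 <= 2 ^ k, (0 < g) + g.+1 <= G,
    (INR n / 2 <= INR m)%R & (INR G <= 2 * INR g.+1)%R].
Proof.
move=> Hn HG HR; pose g := G.-2.
have Hgates : (0 < g) + g.+1 <= G by rewrite /g; case: (G) HG => [|[|[|G']]].
pose k := (trunc_log 2 g.+1).+1.
have Hfit : g.+1 < 2 ^ k by apply: trunc_log_ltn.
have Hk : 2 ^ k <= 2 * G.
  rewrite expnS leq_mul2l /=; apply: leq_trans (trunc_logP _ _) _ => //; lia.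
have n8 := INR_ge8 Hn.
have Hkb := address_length_bound Hk HR.
have Hkn : k.+1 <= n by apply/leP/INR_le; rewrite S_INR; lra.
exists k, (n - k.+1), g; split; first by rewrite subnKC.
- exact: ltnW.
- exact: Hgates.
- rewrite minus_INR; [rewrite (S_INR k); lra | exact/leP].
- rewrite -INR2 -INR_muln; apply/le_INR/leP; rewrite /g; lia.
Qed.

(* Compare logarithms: [2 s ln (2 n + 2) <= 4 s ln n <= n G / 25],
   while [m h ln 2 >= n G ln 2 / 4 > n G / 8]. *)
Lemma codes_fewer_than_family (n G m h s : nat) : 8 <= n -> 1 <= G ->
  (INR n / 2 <= INR m)%R -> (INR G <= 2 * INR h)%R ->
  (INR s <= 1 / 100 * INR n * INR G / ln (INR n))%R ->
  (2 * n + 2) ^ (2 * s) < 2 ^ (m * h).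
Proof.
move=> Hn HG Hm Hh Hs.
have n8 := INR_ge8 Hn.
have G1 : (1 <= INR G)%R by apply: (le_INR 1); apply/leP.
have lnn : (0 < ln (INR n))%R by rewrite -ln_1; apply: ln_increasing; lra.
have Hln2 := ln_lt_2.
have Hsln : (INR s * ln (INR n) <= 1 / 100 * INR n * INR G)%R.
  have := Rmult_le_compat_r _ _ _ (Rlt_le _ _ lnn) Hs.
  by rewrite /Rdiv Rmult_assoc Rinv_l ?Rmult_1_r //; lra.
have Hsymbols : (ln (INR (2 * n + 2)) <= 2 * ln (INR n))%R.
  have -> : (2 * ln (INR n) = ln (INR n * INR n))%R by rewrite ln_mult; lra.
  rewrite INR_addn INR_muln INR2; apply: ln_le; nra.
have Hmh : (INR n * INR G / 4 <= INR m * INR h)%R by have := pos_INR h; nra.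
apply/ltP/INR_lt; rewrite !INR_expn INR_addn !INR_muln INR2.
apply: ln_lt_inv; try (apply: pow_lt; lra).
rewrite !ln_pow ?INR_muln ?INR2; try lra.
have Hcodes : (2 * INR s * ln (2 * INR n + 2) <= 4 * (INR s * ln (INR n)))%R.
  rewrite INR_addn INR_muln INR2 in Hsymbols; have := pos_INR s; nra.
have Hfam : (INR n * INR G / 4 * ln 2 <= INR m * INR h * ln 2)%R.
  apply: Rmult_le_compat_r; lra.
have HnG : (0 < INR n * INR G)%R by apply: Rmult_lt_0_compat; lra.
nra.
Qed.

Theorem proposition1 :
  exists (c : R) (n0 : nat), (0 < c)%R /\
    forall n G : nat, (n0 <= n)%N -> (1 <= G)%N ->
      (INR G <= Rpower 2 (INR n / 4))%R ->
      exists f : ('I_n -> bool) -> bool,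
        (exists F : formula n, computes F f /\ (fgates F <= G)%N) /\
        (forall F : formula n, computes F f ->
           (c * INR n * INR G / ln (INR n) <= INR (fsize F))%R).
Proof.
exists (1 / 100)%R, 8; split; first lra.
move=> n G Hn HG HR.
have [k [m [g [Hsplit Hfit Hgates Hm Hh]]]] := choose_parameters Hn HG HR.
have Htarget : (0 <= 1 / 100 * INR n * INR G / ln (INR n))%R.
  have n8 := INR_ge8 Hn.
  have lnn : (0 < ln (INR n))%R by rewrite -ln_1; apply: ln_increasing; lra.
  rewrite /Rdiv; apply: Rmult_le_pos; last exact/Rlt_le/Rinv_0_lt_compat.
  apply: Rmult_le_pos; [lra | exact: pos_INR].
have [s [Hs_le Hs_gt]] := nat_floor Htarget.
have Hcount : (2 * n + 2) ^ (2 * s) < #|{: selector m g}|.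
  by rewrite card_selector; exact: codes_fewer_than_family Hs_le.
have [S HS] := counting_lower_bound (fam_inj (var_split := Hsplit) Hfit) Hcount.
exists (fam Hsplit S); split.
- by exists (dnf Hsplit S); split; rewrite ?dnf_gates.
- move=> F /HS /leP /le_INR; rewrite S_INR; lra.
Qed.
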